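(* Let $q$ be a root of unity with $q^4\ne1$ and let $\rho$ be a type-$0$ representation with parameters $\sigma$ (general), $w$, $(\vec s,\vec t)\in E^0_{\sigma,w}$. (1) If $\Pi_s=\Pi_t=0$ and $r_i(\sigma,w)=r_j(\sigma,w)=0$ for some $i\neq j$ in $\mathbb Z/D$, then $\rho$ is reducible. (2) If moreover $z_0=\sigma^D+\sigma^{-D}\neq\pm2$, the converse holds: $\rho$ reducible implies $\Pi_s=\Pi_t=0$ and $r_i=r_j=0$ for some $i\ne j$.
   Context: $\mathcal S_q(\Sigma_{1,1})$ is the Kauffman bracket skein algebra of the one-punctured torus, generated by the slope $0,1,\infty$ curves $\alpha_0,\alpha_1,\alpha_\infty$. For $q$ a root of unity: $n=\mathrm{ord}(q^2)$, $D=n$. For $\sigma\in\mathbb C^\times$: $z_0=\sigma^D+\sigma^{-D}$, $\lambda_i=q^{2i}\sigma+q^{-2i}\sigma^{-1}$, $\hat\lambda_i=q^{2i}\sigma-q^{-2i}\sigma^{-1}$ ($i\in\mathbb Z/D$); $\sigma$ is general if $z_0\ne\pm2$ or ($z_0=-2$ and $n$ even). $r_i(\sigma,w)=\frac{w+q^{4i+2}\sigma^2+q^{-4i-2}\sigma^{-2}}{\hat\lambda_i\hat\lambda_{i+1}}$, $E^0_{\sigma,w}=\{(\vec s,\vec t)\in\mathbb C^{2D}:s_it_i=r_i(\sigma,w)\}$, $\Pi_s=\prod_i s_i$, $\Pi_t=\prod_it_i$. The type-$0$ representation: $V$ with basis $\{v_i\}_{i\in\mathbb Z/D}$, $\rho(\alpha_0)v_i=\lambda_iv_i$,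 $\rho(\alpha_1)v_i=q^{2i+1}\sigma s_iv_{i+1}+q^{-2i+1}\sigma^{-1}t_{i-1}v_{i-1}$, $\rho(\alpha_\infty)v_i=s_iv_{i+1}+t_{i-1}v_{i-1}$; this is a representation of $\mathcal S_q(\Sigma_{1,1})$. *)

From HB Require Import structures.
From mathcomp Require Import all_boot all_order all_algebra.
Set Implicit Arguments. Unset Strict Implicit. Unset Printing Implicit Defensive.
Import Order.TTheory GRing.Theory Num.Theory.
From mathcomp Require Import complex Rstruct.
Local Open Scope ring_scope.

Definition C : numClosedFieldType := complex Rdefinitions.R.

Section TypeZero.
Variables (q sigma w : C) (D : nat).
Variables (s t : 'I_D -> C).

Definition lam (i : 'I_D) : C := q ^+ (2 * i) * sigma + q ^- (2 * i) * sigma^-1.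
Definition lamhat (i : 'I_D) : C := q ^+ (2 * i) * sigma - q ^- (2 * i) * sigma^-1.

Definition z0 : C := sigma ^+ D + sigma ^- D.

(* sigma general (n = D = ord(q^2)) *)
Definition general_sigma : Prop :=
  (z0 != 2 /\ z0 != -2) \/ (z0 = -2 /\ ~~ odd D).

Definition r (i : 'I_D) : C :=
  (w + q ^+ (4 * i + 2) * sigma ^+ 2 + q ^- (4 * i + 2) * sigma ^- 2)
  / (lamhat i * lamhat (ordS i)).

Definition in_E0 : Prop := forall i : 'I_D, s i * t i = r i.

(* Matrices of rho(alpha_0), rho(alpha_1), rho(alpha_infty) in the basis
   (v_i)_{i in Z/D}, acting on ROW vectors: entry (i,j) is the coefficient
   of v_j in rho(alpha) v_i. *)
Definition rho_alpha0 : 'M[C]_D :=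
  \matrix_(i, j) (if j == i then lam i else 0).

Definition rho_alpha1 : 'M[C]_D :=
  \matrix_(i, j) ((if j == ordS i then q ^+ (2 * i + 1) * sigma * s i else 0)
                + (if j == ord_pred i then q ^- (2 * i) * q * sigma^-1 * t (ord_pred i)
                   else 0)).

Definition rho_alphainf : 'M[C]_D :=
  \matrix_(i, j) ((if j == ordS i then s i else 0)
                + (if j == ord_pred i then t (ord_pred i) else 0)).

(* The representation is reducible: there is a nonzero proper subspace of
   V = C^D invariant under the images of the generators alpha_0, alpha_1,
   alpha_infty (equivalently, under the whole image of the skein algebra). *)
Definition reducible : Prop :=
  exists U : 'M[C]_D,
    [/\ (0 < \rank U)%N, (\rank U < D)%N,
        stablemx U rho_alpha0, stablemx U rho_alpha1 & stablemx U rho_alphainf].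

End TypeZero.

From HB Require Import structures.
From mathcomp Require Import all_boot all_order all_algebra.
Import Order.TTheory GRing.Theory Num.Theory.
From mathcomp Require Import complex Rstruct.
From mathcomp Require Import zify ring.
Set Implicit Arguments. Unset Strict Implicit. Unset Printing Implicit Defensive.
Local Open Scope ring_scope.

(* A type-0 representation is a cyclic tridiagonal operator rho(alpha_inf) together with
   the diagonal operator rho(alpha_0), whose eigenvalues lambda_i are pairwise distinct
   when z0 <> +-2.  If s_k = 0 and t_l = 0 with k <> l, the coordinates
   v_(l+1), ..., v_k span an invariant subspace.  Conversely, an invariant subspace is
   spanned by the basis vectors it contains (separating the distinct eigenvalues of
   rho(alpha_0)); walking around Z/D, the places where this set of indices is left
   forwards and backwards give a zero s_b and a zero t_c with b <> c, and then
   r_b = s_b t_b = 0 and r_c = s_c t_c = 0.  Since q^4 <> 1 we have D >= 3, so the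
   two neighbours of an index are distinct and these entries are not mixed up. *)

Section CyclicInterval.
Local Open Scope nat_scope.
Variable n : nat.
Implicit Types a b z : 'I_n.

Lemma val_ordS z : (ordS z : nat) = if z.+1 == n then 0 else z.+1.
Proof.
rewrite /=; have := ltn_ord z; case: eqP => [-> _|neq_zn lt_zn]; first exact: modnn.
by rewrite modn_small; lia.
Qed.

Lemma val_ord_pred z : (ord_pred z : nat) = if z == 0 :> nat then n.-1 else z.-1.
Proof.
have := ltn_ord z; case: z => [[|z]] //= lt_zn _; first by rewrite modn_small; lia.
by rewrite modnDr modn_small; lia.
Qed.

Lemma ordS_neq_ord_pred z : 3 <= n -> ordS z != ord_pred z.
Proof.
move=> n_ge3; apply/eqP => /(congr1 (@nat_of_ord n)); rewrite val_ordS val_ord_pred.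
by have := ltn_ord z; case: eqP; case: eqP => /=; lia.
Qed.

(* [cdist a z] is the number of [ordS]-steps from [a] to [z]. *)
Definition cdist a z : nat := (z + n - a) %% n.

Lemma cdistE a z : cdist a z = if a <= z then z - a else z + n - a.
Proof.
have := ltn_ord a; have := ltn_ord z; rewrite /cdist; case: (leqP a z) => le_az lt_zn lt_an.
  by rewrite -addnBAC // modnDr modn_small; lia.
by rewrite modn_small; lia.
Qed.

Lemma cdist_lt a z : cdist a z < n.
Proof. by rewrite cdistE; have := ltn_ord a; have := ltn_ord z; case: (leqP a z); lia. Qed.

Lemma cdist_inj a : injective (cdist a).
Proof.
move=> z1 z2; rewrite !cdistE => e; apply: ord_inj.
have := ltn_ord a; have := ltn_ord z1; have := ltn_ord z2.
by move: e; case: (leqP a z1); case: (leqP a z2); lia.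
Qed.

Lemma cdistnn a : cdist a a = 0.
Proof. by rewrite cdistE leqnn subnn. Qed.

Lemma cdist_ord_pred_self a : cdist a (ord_pred a) = n.-1.
Proof.
rewrite cdistE val_ord_pred; have := ltn_ord a.
by case: eqP => a0; case: ifP; lia.
Qed.

Lemma cdistSr a z : cdist a (ordS z) = if cdist a z == n.-1 then 0 else (cdist a z).+1.
Proof.
rewrite !cdistE val_ordS; have := ltn_ord a; have := ltn_ord z.
by case: eqP => ?; case: (leqP a z); repeat case: ifP; lia.
Qed.

Lemma cdistPr a z : cdist a (ord_pred z) = if cdist a z == 0 then n.-1 else (cdist a z).-1.
Proof.
rewrite !cdistE val_ord_pred; have := ltn_ord a; have := ltn_ord z.
by case: eqP => ?; case: (leqP a z); repeat case: ifP; lia.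
Qed.

Definition carc a b : pred 'I_n := [pred z | cdist a z <= cdist a b].

Lemma carc_l a b : a \in carc a b.
Proof. by rewrite inE cdistnn. Qed.

Lemma carc_ord_pred_l a b : b != ord_pred a -> ord_pred a \notin carc a b.
Proof.
move=> neq_b; rewrite inE cdist_ord_pred_self -ltnNge.
have : cdist a b != n.-1.
  by apply: contra neq_b => /eqP e; apply/eqP/(@cdist_inj a); rewrite e cdist_ord_pred_self.
by have := cdist_lt a b; lia.
Qed.

Lemma carc_exitS a b z : z \in carc a b -> ordS z \notin carc a b -> z = b.
Proof.
rewrite !inE cdistSr => in_z out_z; apply: (@cdist_inj a).
by have := cdist_lt a b; move: in_z out_z; case: eqP; lia.
Qed.

Lemma carc_exitP a b z : z \in carc a b -> ord_pred z \notin carc a b -> z = a.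
Proof.
rewrite !inE cdistPr => in_z out_z; apply: (@cdist_inj a); rewrite cdistnn.
by move: in_z out_z; case: eqP; lia.
Qed.

Lemma val_iter_ordS z k : (iter k (@ordS n) z : nat) = (z + k) %% n.
Proof.
elim: k => [|k IHk] /=; first by rewrite addn0 modn_small.
by rewrite IHk -addn1 modnDml addn1 addnS.
Qed.

Lemma exists_exitS (P : pred 'I_n) x y : P x -> ~~ P y -> exists2 z, P z & ~~ P (ordS z).
Proof.
move=> Px Py; case: (pickP [pred z | P z && ~~ P (ordS z)]) => [z /andP[]|no_exit].
  by exists z.
have P_iter k : P (iter k (@ordS n) x).
  by elim: k => //= k IHk; have := no_exit (iter k (@ordS n) x); rewrite inE IHk => /negbFE.
have iter_xy : iter (y + n - x) (@ordS n) x = y.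
  apply: ord_inj; rewrite val_iter_ordS subnKC; last by have := ltn_ord x; lia.
  by rewrite modnDr modn_small.
by move: Py; rewrite -iter_xy P_iter.
Qed.

Lemma exists_exitP (P : pred 'I_n) x y : P x -> ~~ P y -> exists2 z, P z & ~~ P (ord_pred z).
Proof.
move=> Px Py; have nnPx : ~~ predC P x by rewrite /= Px.
have [z /= nPz] := exists_exitS Py nnPx.
by rewrite negbK => PSz; exists (ordS z); rewrite // ordSK.
Qed.

End CyclicInterval.

Section CoordinateSubspaces.
Variables (F : fieldType) (n : nat).
Implicit Types (S : {pred 'I_n}) (M : 'M[F]_n).

Definition coord_proj S : 'M[F]_n := diag_mx (\row_i (i \in S)%:R).

Lemma coord_proj_stable S M :
  (forall i j, i \in S -> j \notin S -> M i j = 0) -> stablemx (coord_proj S) M.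
Proof.
move=> M_out; apply/submxP; exists (coord_proj S *m M).
apply/matrixP => i j; rewrite mul_mx_diag mul_diag_mx !mxE.
case: (boolP (j \in S)) => [_|Sj]; first by rewrite mulr1.
rewrite /= mulr0n mulr0; case: (boolP (i \in S)) => [Si|_]; first by rewrite M_out ?mulr0.
by rewrite /= mulr0n mul0r.
Qed.

Lemma coord_proj_rank_gt0 S x : x \in S -> (0 < \rank (coord_proj S))%N.
Proof.
move=> Sx; rewrite lt0n mxrank_eq0; apply/eqP => /matrixP/(_ x x).
by rewrite !mxE eqxx Sx mulr1n => /eqP; rewrite oner_eq0.
Qed.

Lemma coord_proj_rank_lt S y : y \notin S -> (\rank (coord_proj S) < n)%N.
Proof.
move=> Sy; rewrite ltn_neqAle rank_leq_row andbT.
rewrite -[_ == _]/(row_free _) row_free_unit unitmxE det_diag (bigD1 y) //=.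
by rewrite mxE (negbTE Sy) mul0r unitr0.
Qed.

Lemma stable_diag_delta_sub m (d : 'rV[F]_n) (U : 'M[F]_(m, n)) (u : 'rV[F]_n) j :
  injective (d 0) -> stablemx U (diag_mx d) -> (u <= U)%MS -> u 0 j != 0 ->
  ((delta_mx 0 j : 'rV[F]_n) <= U)%MS.
Proof.
move=> d_inj U_d u_sub uj_neq0.
(* Multiplying by [diag_mx d - d k] kills coordinate [k] and keeps coordinate [j]. *)
have kill (ks : seq 'I_n) : j \notin ks ->
    exists v : 'rV[F]_n, [/\ (v <= U)%MS, v 0 j != 0 & {in ks, forall k, v 0 k = 0}].
  elim: ks => [|k ks IHks]; first by exists u.
  rewrite inE negb_or => /andP[j_neq_k /IHks[v [v_sub vj_neq0 v_ks]]].
  pose v' := v *m diag_mx d - d 0 k *: v.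
  have v'E i : v' 0 i = v 0 i * (d 0 i - d 0 k).
    by rewrite /v' mul_mx_diag !mxE mulrBr [d 0 k * _]mulrC.
  exists v'; split.
  - by rewrite addmx_sub ?eqmx_opp ?scalemx_sub // (submx_trans (submxMr _ v_sub)).
  - by rewrite v'E mulf_neq0 // subr_eq0 (inj_eq d_inj).
  - by move=> i; rewrite inE v'E => /predU1P[->|/v_ks->]; rewrite ?subrr ?mulr0 ?mul0r.
have [|v [v_sub vj_neq0 v_out]] := kill (enum [pred k | k != j]).
  by rewrite mem_enum inE eqxx.
suff -> : delta_mx 0 j = (v 0 j)^-1 *: v by apply: scalemx_sub.
apply/rowP => i; rewrite !mxE eqxx /=; have [->|i_neq_j] := eqVneq i j.
  by rewrite mulVf.
by rewrite (v_out i) ?mem_enum ?inE //= mulr0.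
Qed.

Definition cyc_tridiag (f g : 'I_n -> F) : 'M[F]_n :=
  \matrix_(i, j) ((if j == ordS i then f i else 0) + (if j == ord_pred i then g i else 0)).

Lemma cyc_tridiag_ordS f g i : (3 <= n)%N -> cyc_tridiag f g i (ordS i) = f i.
Proof. by move=> n_ge3; rewrite mxE eqxx (negbTE (ordS_neq_ord_pred i n_ge3)) addr0. Qed.

Lemma cyc_tridiag_ord_pred f g i : (3 <= n)%N -> cyc_tridiag f g i (ord_pred i) = g i.
Proof.
by move=> n_ge3; rewrite mxE eqxx eq_sym (negbTE (ordS_neq_ord_pred i n_ge3)) add0r.
Qed.

Lemma cyc_tridiag_stable_carc f g a b :
  g a = 0 -> f b = 0 -> stablemx (coord_proj (carc a b)) (cyc_tridiag f g).
Proof.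
move=> ga0 fb0; apply: coord_proj_stable => i j in_i out_j; rewrite mxE.
have -> : (if j == ordS i then f i else 0) = 0.
  by case: eqP => // ji; rewrite (carc_exitS in_i) // -ji.
have -> : (if j == ord_pred i then g i else 0) = 0.
  by case: eqP => // ji; rewrite (carc_exitP in_i) // -ji.
by rewrite addr0.
Qed.

Lemma cyc_tridiag_stable_zeros m (d : 'rV[F]_n) (f g : 'I_n -> F) (U : 'M[F]_(m, n)) :
  (3 <= n)%N -> injective (d 0) ->
  stablemx U (diag_mx d) -> stablemx U (cyc_tridiag f g) ->
  (0 < \rank U)%N -> (\rank U < n)%N ->
  exists b c, [/\ f b = 0, g c = 0 & b != ord_pred c].
Proof.
move=> n_ge3 d_inj U_d U_fg rankU_gt0 rankU_lt.
pose P := [pred k | ((delta_mx 0 k : 'rV[F]_n) <= U)%MS].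
have [x Px] : exists x, P x.
  have [[i j] /= Uij_neq0|U0] := pickP [pred ij : 'I_m * 'I_n | U ij.1 ij.2 != 0].
    by exists j; apply: (stable_diag_delta_sub d_inj U_d (row_sub i U)); rewrite mxE.
  move: rankU_gt0; rewrite lt0n mxrank_eq0; case/eqP; apply/matrixP => i j.
  by have /negbFE/eqP := U0 (i, j); rewrite mxE.
have [y Py] : exists y, ~~ P y.
  have [y /negP Py|allP] := pickP [pred y | ~~ P y]; first by exists y; apply/negP.
  suff : (1%:M <= U)%MS by move/mxrankS; rewrite mxrank1; lia.
  by apply/row_subP => k; rewrite rowE mulmx1; have /negbFE := allP k.
have row_sub_U k : P k -> (row k (cyc_tridiag f g) <= U)%MS.
  by move=> Pk; rewrite rowE (submx_trans (submxMr _ Pk)).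
have [b Pb Pb'] := exists_exitS Px Py.
have [c Pc Pc'] := exists_exitP Px Py.
exists b, c; split.
- apply/eqP; apply: contraNT Pb' => fb_neq0.
  apply: stable_diag_delta_sub d_inj U_d (row_sub_U b Pb) _.
  by rewrite mxE cyc_tridiag_ordS.
- apply/eqP; apply: contraNT Pc' => gc_neq0.
  apply: stable_diag_delta_sub d_inj U_d (row_sub_U c Pc) _.
  by rewrite mxE cyc_tridiag_ord_pred.
- by apply: contraNneq Pc' => <-.
Qed.

End CoordinateSubspaces.

Arguments coord_proj {F n} S.

Lemma distinct_zero_factors (R : idomainType) n (s t r : 'I_n -> R) :
  (forall i, s i * t i = r i) ->
  \prod_(i < n) s i = 0 -> \prod_(i < n) t i = 0 ->
  (exists i j : 'I_n, [/\ i != j, r i = 0 & r j = 0]) ->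
  exists k l : 'I_n, [/\ s k = 0, t l = 0 & k != l].
Proof.
move=> st_r /eqP/prodf_eq0[k _ /eqP sk0] /eqP/prodf_eq0[l _ /eqP tl0] [i [j [ij ri0 rj0]]].
have [kl|] := eqVneq k l; last by exists k, l.
rewrite -{}kl in tl0.
have [i' [i'_neq_k ri'0]] : exists i', i' != k /\ r i' = 0.
  have [ik|] := eqVneq i k; last by exists i.
  by exists j; rewrite -ik eq_sym.
move/eqP: ri'0; rewrite -st_r mulf_eq0 => /orP[/eqP si'0|/eqP ti'0].
  by exists i', k.
by exists k, i'; rewrite eq_sym.
Qed.

Lemma prim_root_sqr_order_ge3 (F : idomainType) (q : F) n :
  n.-primitive_root (q ^+ 2) -> q ^+ 4 != 1 -> (3 <= n)%N.
Proof.
move=> q2_prim; apply: contraTleq => n_lt3; rewrite negbK (_ : 4 = 2 * 2)%N // exprM.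
have := prim_expr_order q2_prim; have := prim_order_gt0 q2_prim.
by case: n {q2_prim} n_lt3 => [|[|[|n]]] //= _ _; rewrite ?expr1 => ->; rewrite ?expr1n.
Qed.

Lemma sigma_pow_sqr_neq1 (sigma : C) n :
  z0 sigma n != 2 -> z0 sigma n != -2 -> (sigma ^+ n) ^+ 2 != 1.
Proof.
move=> z0_neq2 z0_neqN2; rewrite sqrf_eq1 negb_or; apply/andP; split.
  by apply: contra z0_neq2 => /eqP sn1; rewrite /z0 sn1 invr1.
by apply: contra z0_neqN2 => /eqP snN1; rewrite /z0 snN1 invrN1 -opprD.
Qed.

Lemma lam_inj (q sigma : C) n :
  n.-primitive_root (q ^+ 2) -> sigma != 0 -> (sigma ^+ n) ^+ 2 != 1 ->
  injective (@lam q sigma n).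
Proof.
move=> q2_prim sigma_neq0 sn2_neq1 i k lam_ik.
have q_neq0 : q != 0.
  apply/eqP => q0; have := prim_expr_order q2_prim.
  rewrite q0 expr0n /= expr0n eqn0Ngt (prim_order_gt0 q2_prim) /= => /eqP.
  by rewrite eq_sym oner_eq0.
set x := q ^+ (2 * i); set y := q ^+ (2 * k).
have x_neq0 : x != 0 by rewrite expf_neq0.
have y_neq0 : y != 0 by rewrite expf_neq0.
have factor : x * y * sigma * (lam q sigma i - lam q sigma k) =
              (x - y) * (x * y * sigma ^+ 2 - 1).
  by rewrite /lam -/x -/y; field; rewrite x_neq0 y_neq0 sigma_neq0.
move/eqP: factor; rewrite lam_ik subrr mulr0 eq_sym mulf_eq0 !subr_eq0 => /orP[].
  rewrite /x /y !exprM (eq_prim_root_expr q2_prim) !modn_small // => /eqP.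
  exact: ord_inj.
have pow_n_eq1 m : (q ^+ (2 * m)) ^+ n = 1.
  by rewrite exprM -exprM mulnC exprM (prim_expr_order q2_prim) expr1n.
move/eqP/(congr1 (fun z => z ^+ n)); rewrite /= !exprMn /x /y !pow_n_eq1 !mul1r expr1n.
by rewrite -expr2 => sn2_eq1; rewrite sn2_eq1 eqxx in sn2_neq1.
Qed.

Section TypeZero.
Variables (q sigma w : C) (n : nat) (s t : 'I_n -> C).
Hypotheses (n_ge3 : (3 <= n)%N) (st_E0 : in_E0 q sigma w s t).

Lemma rho_alpha0E : rho_alpha0 q sigma n = diag_mx (\row_i lam q sigma i).
Proof. by apply/matrixP => i j; rewrite !mxE eq_sym; case: eqP => [->|]; rewrite ?mulr1n. Qed.

Lemma rho_alpha1E : rho_alpha1 q sigma s t =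
  cyc_tridiag (fun i => q ^+ (2 * i + 1) * sigma * s i)
              (fun i => q ^- (2 * i) * q * sigma^-1 * t (ord_pred i)).
Proof. by []. Qed.

Lemma rho_alphainfE : rho_alphainf s t = cyc_tridiag s (fun i => t (ord_pred i)).
Proof. by []. Qed.

Lemma reducible_of_zeros :
  \prod_(i < n) s i = 0 -> \prod_(i < n) t i = 0 ->
  (exists i j : 'I_n, [/\ i != j, r q sigma w i = 0 & r q sigma w j = 0]) ->
  reducible q sigma s t.
Proof.
move=> prod_s0 prod_t0 r_zeros.
have [k [l [sk0 tl0 k_neq_l]]] := distinct_zero_factors st_E0 prod_s0 prod_t0 r_zeros.
have := @carc_ord_pred_l _ (ordS l) k; rewrite ordSK => /(_ k_neq_l) l_notin.
exists (coord_proj (carc (ordS l) k)); split.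
- exact: coord_proj_rank_gt0 (carc_l _ _).
- exact: coord_proj_rank_lt l_notin.
- by apply: coord_proj_stable => i j in_i; rewrite mxE; case: eqP => [->|]; rewrite ?in_i.
- by rewrite rho_alpha1E cyc_tridiag_stable_carc // ?ordSK ?tl0 ?sk0 ?mulr0.
- by rewrite rho_alphainfE cyc_tridiag_stable_carc // ordSK.
Qed.

Lemma zeros_of_reducible : injective (@lam q sigma n) -> reducible q sigma s t ->
  \prod_(i < n) s i = 0 /\ \prod_(i < n) t i = 0 /\
  exists i j : 'I_n, [/\ i != j, r q sigma w i = 0 & r q sigma w j = 0].
Proof.
move=> lam_injective [U [rankU_gt0 rankU_lt U_alpha0 _ U_alphainf]].
have d_inj : injective ((\row_i lam q sigma i : 'rV_n) 0).
  by move=> i j; rewrite !mxE; apply: lam_injective.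
rewrite rho_alpha0E in U_alpha0; rewrite rho_alphainfE in U_alphainf.
have [b [c [sb0 tc0 b_neq_c]]] :=
  cyc_tridiag_stable_zeros n_ge3 d_inj U_alpha0 U_alphainf rankU_gt0 rankU_lt.
split; first by apply/eqP/prodf_eq0; exists b => //; apply/eqP.
split; first by apply/eqP/prodf_eq0; exists (ord_pred c) => //; apply/eqP.
by exists b, (ord_pred c); rewrite -!st_E0 sb0 tc0 mul0r mulr0.
Qed.

End TypeZero.

Theorem mainTheorem9 (q : C) (n : nat) (sigma w : C) (s t : 'I_n -> C) :
  n.-primitive_root (q ^+ 2) ->
  q ^+ 4 != 1 ->
  sigma != 0 ->
  general_sigma sigma n ->
  in_E0 q sigma w s t ->
  ((\prod_(i < n) s i = 0 /\ \prod_(i < n) t i = 0 /\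
    exists i j : 'I_n, [/\ i != j, r q sigma w i = 0 & r q sigma w j = 0]) ->
     reducible q sigma s t)
  /\
  (z0 sigma n != 2 -> z0 sigma n != -2 ->
   reducible q sigma s t ->
   \prod_(i < n) s i = 0 /\ \prod_(i < n) t i = 0 /\
   exists i j : 'I_n, [/\ i != j, r q sigma w i = 0 & r q sigma w j = 0]).
Proof.
move=> q2_prim q4_neq1 sigma_neq0 _ st_E0.
have n_ge3 := prim_root_sqr_order_ge3 q2_prim q4_neq1.
split; first by case=> prod_s0 [prod_t0 r_zeros]; exact: reducible_of_zeros.
move=> z0_neq2 z0_neqN2; apply: zeros_of_reducible n_ge3 st_E0 _.
exact: lam_inj q2_prim sigma_neq0 (sigma_pow_sqr_neq1 z0_neq2 z0_neqN2).
Qed.
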